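(* Let $k\ge1$ and let $p=(p_1,\dots,p_k)$ be non-principal ultrafilters on $\mathbb N$ with $\{n: n\equiv j \pmod k\}\in p_j$ for each $j$. For a sequence $i=(i_j)_{j\ge1}$ of integers with $i_j\equiv j\pmod k$, put $\alpha_j(i)=\{i_j,i_j+k,\dots,i_{j+k}-k\}$ and $\alpha_\beta(i)=\bigcup_{j\in\beta}\alpha_j(i)$ for $\beta\in\mathscr F_\emptyset$. Let $X$ be a compact metric space and $f:\mathscr F_\emptyset\to X$ an $\mathcal S_k$-sequence. Define $\tilde f_p:\mathscr F_\emptyset\to X$ by $$\tilde f_p(\beta)=\operatorname*{p_1\text{-}lim}_{i_1}\ \operatorname*{p_2\text{-}lim}_{i_2}\cdots\operatorname*{p_k\text{-}lim}_{i_k}\ \operatorname*{p_1\text{-}lim}_{i_{k+1}}\ \operatorname*{p_2\text{-}lim}_{i_{k+2}}\cdots f(\alpha_\beta(i)),$$ where the limit in $i_m$ is taken along $p_{j}$ with $j\in\{1,\dots,k\}$, $j\equiv m\pmod k$, and the iterated limits are over the finitely many indices $i_m$ on which $f(\alpha_\beta(i))$ depends. Then $\tilde f_p$ is an asymptotic $\mathcal S_k$-subsequence of $f$.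
   Context: $\mathscr F$ is the family of finite non-empty subsets of $\mathbb N=\{1,2,\dots\}$, $\mathscr F_\emptyset=\mathscr F\cup\{\emptyset\}$. For $k\ge0$, $\mathcal S_k\subset\mathscr F$ is the family of $\alpha\in\mathscr F$ such that for every $i\in\alpha$, either $i=\max\alpha$ or there is $j\in\alpha$ with $i<j\le i+k$. An $\mathcal S_k$-sequence in $X$ is a map $f:\mathscr F_\emptyset\to X$ (intended to be evaluated on $\mathcal S_k$). Given pairwise disjoint $\alpha_1,\alpha_2,\dots\in\mathscr F$, let $\alpha_\beta=\bigcup_{i\in\beta}\alpha_i$ ($\alpha_\emptyset=\emptyset$). If $l\ge0$ and $\beta\mapsto\alpha_\beta$ maps $\mathcal S_l$ into $\mathcal S_k$, then $\beta\mapsto f(\alpha_\beta)$ ($\beta\in\mathscr F_\emptyset$) is an $\mathcal S_l$-subsequence of the $\mathcal S_k$-sequence $f$. For $X$ compact metric, an asymptotic $\mathcal S_l$-subsequence of $f$ is a map $\mathscr F_\emptyset\to X$ that is the pointwise limit of a sequence of $\mathcal S_l$-subsequences of $f$. For an ultrafilter $q$ on $\mathbb N$ and a map $x:\mathbb N\to X$, $\operatorname{q\text{-}lim}_n x(n)$ is the unique $y\in X$ such that $\{n: x(n)\in V\}\in q$ for every neighbourhood $V$ of $y$. *)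

From Stdlib Require Import Reals ClassicalEpsilon.
From Stdlib Require Import List.
From mathcomp Require Import all_boot.
Set Implicit Arguments. Unset Strict Implicit. Unset Printing Implicit Defensive.

Definition open_set (X : Metric_Space) (U : Base X -> Prop) : Prop :=
  forall x, U x -> exists eps : R, Rlt 0 eps /\ forall z, Rlt (dist X x z) eps -> U z.

Definition compact_space (X : Metric_Space) : Prop :=
  forall (I : Type) (U : I -> Base X -> Prop),
    (forall i, open_set (U i)) -> (forall x, exists i, U i x) ->
    exists l : list I, forall x, exists i, List.In i l /\ U i x.

(* Ultrafilters on N (as predicates on subsets of nat; non-principal ones
   never contain {0}, so they are exactly the non-principal ultrafilters on N). *)
Definition ultrafilter (U : (nat -> Prop) -> Prop) : Prop :=
  U (fun _ => True) /\ ~ U (fun _ => False) /\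
  (forall A B : nat -> Prop, (forall n, A n -> B n) -> U A -> U B) /\
  (forall A B : nat -> Prop, U A -> U B -> U (fun n => A n /\ B n)) /\
  (forall A : nat -> Prop, U A \/ U (fun n => ~ A n)).

Definition nonprincipal_ultrafilter (U : (nat -> Prop) -> Prop) : Prop :=
  ultrafilter U /\ forall m : nat, ~ U (fun n => n = m).

Definition is_qlim (X : Metric_Space) (q : (nat -> Prop) -> Prop)
  (x : nat -> Base X) (y : Base X) : Prop :=
  forall V : Base X -> Prop,
    (exists eps : R, Rlt 0 eps /\ forall z, Rlt (dist X y z) eps -> V z) ->
    q (fun n => V (x n)).

(* q-lim_n x(n): the (unique, when it exists) q-limit, chosen by epsilon. *)
Definition qlim (X : Metric_Space) (q : (nat -> Prop) -> Prop) (x : nat -> Base X)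
  : Base X := epsilon (inhabits (x 0%N)) (is_qlim q x).

(* Finite subsets of N = {1,2,...} represented canonically as strictly
   increasing lists of positive naturals. *)
Definition isF0 (s : seq nat) : bool := sorted ltn s && all (fun x => 0 < x) s.
Definition isF (s : seq nat) : bool := isF0 s && (s != [::]).

Definition smax (s : seq nat) : nat := \max_(x <- s) x.

Definition canon (s : seq nat) : seq nat := [seq x <- iota 1 (smax s) | x \in s].

Definition Sk (l : nat) (a : seq nat) : bool :=
  isF a && all (fun i => (i == smax a) || has (fun j => (i < j) && (j <= i + l)) a) a.

Definition abeta (a : nat -> seq nat) (b : seq nat) : seq nat :=
  canon (flatten [seq a j | j <- b]).

Definition subseq_family (k l : nat) (a : nat -> seq nat) : Prop :=
  (forall j, 0 < j -> isF (a j)) /\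
  (forall j j', 0 < j -> 0 < j' -> j != j' -> all (fun x => x \notin a j') (a j)) /\
  (forall b, Sk l b -> Sk k (abeta a b)).

Definition asymptotic_subseq (X : Metric_Space) (k l : nat)
  (f : seq nat -> Base X) (h : seq nat -> Base X) : Prop :=
  exists A : nat -> nat -> seq nat,
    (forall n, subseq_family k l (A n)) /\
    forall b, isF0 b -> forall eps : R, Rlt 0 eps ->
      exists N, forall n, N <= n -> Rlt (dist X (f (abeta (A n) b)) (h b)) eps.

(* alpha_j(i) = {i_j, i_j + k, ..., i_{j+k} - k} *)
Definition alphaj (k : nat) (i : nat -> nat) (j : nat) : seq nat :=
  [seq x <- iota (i j) (i (j + k) - i j) | (x %% k == i j %% k) && (x + k <= i (j + k))].

Definition alphabeta (k : nat) (i : nat -> nat) (b : seq nat) : seq nat :=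
  abeta (alphaj k i) b.

(* index j in {1..k} with j = m mod k *)
Definition pidx (k m : nat) : nat := ((m.-1) %% k).+1.

Definition upd (i : nat -> nat) (m n : nat) : nat -> nat :=
  fun j => if j == m then n else i j.

(* iterated limit over indices m, m+1, ..., m+r-1 (outermost first),
   index t taken along p_(pidx k t) *)
Fixpoint iterlim (X : Metric_Space) (k : nat) (p : nat -> (nat -> Prop) -> Prop)
  (r m : nat) (F : (nat -> nat) -> Base X) (i : nat -> nat) : Base X :=
  match r with
  | 0 => F i
  | r'.+1 => qlim (p (pidx k m)) (fun n => iterlim k p r' m.+1 F (upd i m n))
  end.

(* tilde f_p(beta): iterated limit over i_1, ..., i_{max beta + k}
   (f(alpha_beta(i)) only depends on these indices) *)
Definition ftilde (X : Metric_Space) (k : nat) (p : nat -> (nat -> Prop) -> Prop)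
  (f : seq nat -> Base X) (b : seq nat) : Base X :=
  iterlim k p (smax b + k) 1 (fun i => f (alphabeta k i b)) (fun _ => 0).

(* For every n, the finitely many iterated limits defining tilde f_p(beta), beta in
   {1..n}, are approximated simultaneously within 1/(n+1) by a single choice of
   indices i_1 < ... < i_(n+k): choose i_m outermost first in the intersection of
   finitely many sets of p_(m mod k), namely the limit neighbourhoods, the residue
   class of m and a tail beyond i_(m-1).  Prolonging this choice to an increasing
   sequence with i_j = j (mod k) gives blocks alpha_j(i) along which beta |->
   alpha_beta(i) maps S_k into S_k, and the resulting S_k-subsequences of f converge
   pointwise to tilde f_p. *)

From Pilot Require Import Defs.
From Stdlib Require Import Reals ClassicalEpsilon List.
From Stdlib Require Import Classical FunctionalExtensionality Lra.
From mathcomp Require Import all_boot zify.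

Section Ultrafilter.
Context {q : (nat -> Prop) -> Prop} (hq : ultrafilter q).

Lemma ufT : q (fun _ => True).
Proof. by case: hq. Qed.

Lemma ufS {A B : nat -> Prop} : (forall n, A n -> B n) -> q A -> q B.
Proof. by case: hq => _ [_ [hS _]]; apply: hS. Qed.

Lemma ufI {A B : nat -> Prop} : q A -> q B -> q (fun n => A n /\ B n).
Proof. by case: hq => _ [_ [_ [hI _]]]; apply: hI. Qed.

Lemma uf_em (A : nat -> Prop) : q A \/ q (fun n => ~ A n).
Proof. by case: hq => _ [_ [_ [_ hem]]]; apply: hem. Qed.

Lemma uf_ex {A : nat -> Prop} : q A -> exists n, A n.
Proof.
move=> qA; apply: NNPP => noA; case: hq => _ [q0 _]; apply: q0.
by apply: ufS qA => n An; apply: noA; exists n.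
Qed.

Lemma ufI_list {T : Type} {l : list T} {P : T -> nat -> Prop} :
  (forall x, List.In x l -> q (P x)) ->
  q (fun n => forall x, List.In x l -> P x n).
Proof.
elim: l => [|a l IH] ql; first by apply: ufS ufT => n _ x [].
have := ufI (ql a (or_introl erefl)) (IH (fun x lx => ql x (or_intror lx))).
by apply: ufS => n [Pa Pl] x [<-|]; last exact: Pl.
Qed.

Lemma uf_gtn : (forall m, ~ q (fun n => n = m)) -> forall L, q (fun n => L < n).
Proof.
move=> q1 L; have qneq m : q (fun n => n <> m).
  by case: (uf_em (fun n => n = m)) => // /q1.
elim: L => [|L IH]; first by apply: ufS (qneq 0) => -[].
by apply: ufS (ufI IH (qneq L.+1)) => n [Ln nL]; lia.
Qed.

Context {X : Metric_Space}.

(* Qualified: the [open_set] of Reals' Rtopology, a predicate on R, shadows it. *)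
Lemma open_ball (y : Base X) (e : R) : Defs.open_set (fun z => Rlt (dist X y z) e).
Proof.
move=> z yz; exists (Rminus e (dist X y z)); split; first lra.
by move=> w zw; have := dist_tri X y w z; lra.
Qed.

Lemma not_is_qlim_ball {x : nat -> Base X} {y} : ~ is_qlim q x y ->
  exists e, Rlt 0 e /\ ~ q (fun n => Rlt (dist X y (x n)) e).
Proof.
move=> nlim; have [V nV] := not_all_ex_not _ _ nlim.
have [[e [e0 eV]] nqV] := imply_to_and _ _ nV.
by exists e; split=> // qe; apply: nqV; apply: ufS qe => n /eV.
Qed.

Lemma qlim_exists (x : nat -> Base X) : compact_space X -> exists y, is_qlim q x y.
Proof.
move=> hX; apply: NNPP => nolim.
have [e he] := choice _ (fun y => not_is_qlim_ball (not_ex_all_not _ _ nolim y)).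
have center z : Rlt (dist X z z) (e z).
  by rewrite (proj2 (dist_refl X z z)) //; exact: (proj1 (he z)).
have [l cover] := hX _ _ (fun y => open_ball y (e y)) (fun z => ex_intro _ z (center z)).
have : q (fun n => forall y, List.In y l -> ~ Rlt (dist X y (x n)) (e y)).
  apply: ufI_list => y _.
  by case: (uf_em (fun n => Rlt (dist X y (x n)) (e y))) => // /(proj2 (he y)).
move=> /uf_ex [n far]; have [y [ly near]] := cover (x n).
exact: far y ly near.
Qed.

Lemma is_qlim_unique (x : nat -> Base X) y y' :
  is_qlim q x y -> is_qlim q x y' -> y = y'.
Proof.
move=> xy xy'; apply: NNPP => yy'.
have d0 : Rlt 0 (dist X y y').
  case: (Rle_lt_or_eq_dec _ _ (Rge_le _ _ (dist_pos X y y'))) => // d0.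
  by case: yy'; apply: (proj1 (dist_refl X y y')).
pose ball (c : Base X) z := Rlt (dist X c z) (Rdiv (dist X y y') 2).
have near c : is_qlim q x c -> q (fun n => ball c (x n)).
  by move=> xc; apply: xc; exists (Rdiv (dist X y y') 2); split; [lra | ].
have [n [yn y'n]] := uf_ex (ufI (near y xy) (near y' xy')).
rewrite /ball (dist_sym X y') in yn y'n.
by have := dist_tri X y y' (x n); lra.
Qed.

Lemma qlimP (x : nat -> Base X) : compact_space X -> is_qlim q x (qlim q x).
Proof. by move=> hX; apply: epsilon_spec; apply: qlim_exists. Qed.

Lemma qlim_cst (c : Base X) : qlim q (fun _ => c) = c.
Proof.
have cc : is_qlim q (fun _ => c) c.
  move=> V [e [e0 eV]]; apply: ufS ufT => n _; apply: eV.
  by rewrite (proj2 (dist_refl X c c)).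
exact: is_qlim_unique (epsilon_spec _ _ (ex_intro _ c cc)) cc.
Qed.

End Ultrafilter.

Lemma smax_ub {s : seq nat} {x} : x \in s -> x <= smax s.
Proof. by move=> sx; apply: leq_bigmax_seq. Qed.

Lemma smax_eq (s : seq nat) x :
  x \in s -> (forall z, z \in s -> z <= x) -> x = smax s.
Proof.
move=> sx ub; apply/eqP; rewrite eqn_leq smax_ub //.
by apply/bigmax_leqP_seq => z sz _; apply: ub.
Qed.

Lemma mem_canon (s : seq nat) x : (x \in canon s) = (0 < x) && (x \in s).
Proof.
rewrite /canon mem_filter mem_iota andbC.
by case sx: (x \in s); rewrite ?andbF // add1n ltnS smax_ub ?andbT.
Qed.

Lemma canon_isF0 (s : seq nat) : isF0 (canon s).
Proof.
apply/andP; split; first exact/sorted_filter/iota_ltn_sorted/ltn_trans.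
by apply/allP => x; rewrite mem_canon => /andP[].
Qed.

Lemma eqmod_ltn_gap {k a b : nat} : a < b -> a = b %[mod k] -> a + k <= b.
Proof.
move=> ab /eqP; rewrite eq_sym eqn_mod_dvd ?(ltnW ab) // => /dvdn_leq.
by rewrite subn_gt0 => /(_ ab); lia.
Qed.

(* Also constrains i_0, which makes every i_j with j > 0 positive. *)
Definition admissible (k : nat) (i : nat -> nat) : Prop :=
  (forall t, i t < i t.+1) /\ (forall t, i t = t %[mod k]).

Section AlphaFamily.
Context {k : nat} (k0 : 0 < k).

Lemma mem_alphaj (i : nat -> nat) j x :
  (x \in alphaj k i j) = [&& i j <= x, x == i j %[mod k] & x + k <= i (j + k)].
Proof.
rewrite /alphaj mem_filter mem_iota andbC.
case: (leqP (i j) x) => //= ijx.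
case: (leqP (x + k) (i (j + k))) => xk; rewrite ?andbF //.
by have -> : x < i j + (i (j + k) - i j) by lia.
Qed.

Context {i : nat -> nat} (hi : admissible k i).

Lemma index_lt : {homo i : t t' / t < t'}.
Proof. by apply: homo_ltn; [exact: ltn_trans | exact: hi.1]. Qed.

Lemma index_leq : {homo i : t t' / t <= t'}.
Proof. by apply: homo_leq; [exact: leqnn | exact: leq_trans | move=> t; exact/ltnW/hi.1]. Qed.

Lemma index_addk j : i (j + k) = i j %[mod k].
Proof. by rewrite !hi.2 modnDr. Qed.

Lemma alphaj_first j : i j \in alphaj k i j.
Proof.
rewrite mem_alphaj leqnn eqxx /=.
by apply: eqmod_ltn_gap; [apply: index_lt; lia | rewrite index_addk].
Qed.

Lemma alphaj_gt0 j x : 0 < j -> x \in alphaj k i j -> 0 < x.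
Proof.
move=> j0; rewrite mem_alphaj => /and3P[ijx _ _].
by have := @index_lt 0 j j0; lia.
Qed.

Lemma alphaj_isF j : 0 < j -> isF (alphaj k i j).
Proof.
move=> j0; apply/andP; split; last by have := alphaj_first j; case: alphaj.
apply/andP; split; first exact/sorted_filter/iota_ltn_sorted/ltn_trans.
by apply/allP => x; apply: alphaj_gt0.
Qed.

Lemma alphaj_disjoint j j' : j != j' ->
  all (fun x => x \notin alphaj k i j') (alphaj k i j).
Proof.
have gap j1 j2 x : j1 < j2 -> x \in alphaj k i j1 -> x \in alphaj k i j2 -> False.
  move=> j12; rewrite !mem_alphaj => /and3P[_ /eqP x1 x1k] /and3P[x2 /eqP x2' _].
  have /(eqmod_ltn_gap j12) /index_leq : j1 = j2 %[mod k].
    by rewrite -(hi.2 j1) -(hi.2 j2) -x1 -x2'.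
  by clear x1 x2'; lia.
move=> jj'; apply/allP => x xj; apply/negP => xj'.
by case: (ltngtP j j') jj' => // [/gap|/gap] g _; [apply: g xj xj'|apply: g xj' xj].
Qed.

Lemma alphaj_next {j x} : x \in alphaj k i j ->
  x + k \in alphaj k i j \/ x + k = i (j + k).
Proof.
rewrite !mem_alphaj => /and3P[ijx /eqP xij xk].
have xkij : x + k = i j %[mod k] by rewrite modnDr.
case: (leqP (x + k + k) (i (j + k))) => xkk.
  by left; rewrite xkij eqxx andbT; lia.
right; apply/eqP; rewrite eqn_leq xk /= leqNgt; apply/negP => /(@eqmod_ltn_gap k).
by rewrite xkij index_addk => /(_ erefl); lia.
Qed.

Lemma alphaj_meet j T : i j <= T < i (j + k) ->
  exists2 y, y \in alphaj k i j & y <= T < y + k.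
Proof.
move=> /andP[ijT Tij]; have := divn_eq (T - i j) k; have := ltn_pmod (T - i j) k0.
set q := _ %/ k; set r := _ %% k => rk Tq.
exists (q * k + i j); last by apply/andP; split; lia.
rewrite mem_alphaj modnMDl eqxx leq_addl /=.
by apply: eqmod_ltn_gap; [lia | rewrite modnMDl index_addk].
Qed.

Lemma mem_abeta_alphaj {b x} : {in b, forall j, 0 < j} ->
  reflect (exists2 j, j \in b & x \in alphaj k i j) (x \in abeta (alphaj k i) b).
Proof.
move=> b0; rewrite /abeta mem_canon; apply: (iffP andP) => [[_ /flatten_mapP]//|].
by move=> [j bj xj]; split; [exact: alphaj_gt0 (b0 j bj) xj | apply/flatten_mapP; exists j].
Qed.

Lemma Sk_abeta_alphaj b : Sk k b -> Sk k (abeta (alphaj k i) b).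
Proof.
move=> /andP[bF ball].
have b0 : {in b, forall j, 0 < j} by case/andP: bF => /andP[_ /allP].
have inA j x : j \in b -> x \in alphaj k i j -> x \in abeta (alphaj k i) b.
  by move=> bj xj; apply/mem_abeta_alphaj => //; exists j.
apply/andP; split.
  have [j bj] : exists j, j \in b.
    by case/andP: bF => _; case: b {ball b0 inA} => // j b; exists j; rewrite mem_head.
  by rewrite /isF canon_isF0 /=; have := inA _ _ bj (alphaj_first j); case: abeta.
apply/allP => x xA; case/(mem_abeta_alphaj b0): (xA) => j bj xj.
case: (alphaj_next xj) => [xkj | xkT].
  by apply/orP; right; apply/hasP; exists (x + k); [exact: inA xkj | lia].
case/orP: (allP ball j bj) => [/eqP jmax | /hasP [j' bj' /andP[jj' j'jk]]].
  apply/orP; left; apply/eqP/smax_eq => // z /(mem_abeta_alphaj b0) [j'' bj'' zj''].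
  have : i (j'' + k) <= i (j + k) by apply: index_leq; rewrite leq_add2r jmax smax_ub.
  by move: zj''; rewrite mem_alphaj => /and3P[_ _]; lia.
(* x is the last element of alpha_j, and the block alpha_j' of the next index
   j' <= j + k of b has an element in (x, x + k]. *)
apply/orP; right; apply/hasP.
have [y yj' /andP[yT Ty]] : exists2 y, y \in alphaj k i j' & y <= x + k < y + k.
  apply: alphaj_meet; rewrite xkT index_leq ?index_lt //=; lia.
by exists y; [exact: inA yj' | lia].
Qed.

Lemma alphaj_subseq_family : subseq_family k k (alphaj k i).
Proof.
split; first exact: alphaj_isF.
by split=> [j j' _ _ |]; [exact: alphaj_disjoint | exact: Sk_abeta_alphaj].
Qed.
End AlphaFamily.

Definition depends_below {T : Type} (w : nat) (F : (nat -> nat) -> T) : Prop :=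
  forall i i', (forall u, u < w -> i u = i' u) -> F i = F i'.

Lemma depends_belowW {T : Type} {w w'} (F : (nat -> nat) -> T) :
  w <= w' -> depends_below w F -> depends_below w' F.
Proof. by move=> ww' dF i i' ii'; apply: dF => u uw; apply: ii'; lia. Qed.

Section IteratedLimit.
Context {k : nat} (k0 : 0 < k) {p : nat -> (nat -> Prop) -> Prop}.
Hypothesis hp : forall j, 1 <= j <= k -> nonprincipal_ultrafilter (p j).
Hypothesis hres : forall j, 1 <= j <= k -> p j (fun n => n %% k = j %% k).
Context {X : Metric_Space}.

Lemma pidx_range m : 1 <= pidx k m <= k.
Proof. by rewrite /pidx ltn_pmod. Qed.

Lemma p_ultrafilter m : ultrafilter (p (pidx k m)).
Proof. exact: (hp _ (pidx_range m)).1. Qed.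

Lemma pidx_mod m : 0 < m -> pidx k m = m %[mod k].
Proof. by case: m => // m _; rewrite /pidx -addn1 modnDml addn1. Qed.

Lemma upd_eq (i : nat -> nat) m n t : t != m -> upd i m n t = i t.
Proof. by rewrite /upd => /negbTE ->. Qed.

Lemma iterlim_cst r m (F : (nat -> nat) -> Base X) i :
  depends_below m F -> iterlim k p r m F i = F i.
Proof.
elim: r m i => [|r IH] m i dF //=.
have -> : (fun n => iterlim k p r m.+1 F (upd i m n)) = (fun _ => F i).
  apply: functional_extensionality => n; rewrite IH; last exact: depends_belowW dF.
  by apply: dF => u um; rewrite upd_eq // ltn_eqF.
exact: (qlim_cst (p_ultrafilter m) (F i)).
Qed.

Lemma iterlim_pad r t m (F : (nat -> nat) -> Base X) i :
  depends_below (m + r) F -> iterlim k p (r + t) m F i = iterlim k p r m F i.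
Proof.
elim: r m i => [|r IH] m i dF; first by rewrite iterlim_cst // -(addn0 m).
rewrite addSn /=; congr qlim; apply: functional_extensionality => n.
by apply: IH; rewrite addSnnS.
Qed.

Context (hX : compact_space X).

Lemma iterlim_step r m i (Gs : list ((nat -> nat) -> Base X)) L eps :
  0 < m -> Rlt 0 eps -> exists n, [/\ L < n, n = m %[mod k] &
    (forall G, List.In G Gs ->
      Rlt (dist X (iterlim k p r.+1 m G i) (iterlim k p r m.+1 G (upd i m n))) eps)].
Proof.
move=> m0 eps0; have pm := p_ultrafilter m.
have near G : p (pidx k m) (fun n =>
    Rlt (dist X (iterlim k p r.+1 m G i) (iterlim k p r m.+1 G (upd i m n))) eps).
  apply: (qlimP pm (fun n => iterlim k p r m.+1 G (upd i m n)) hX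
    (fun z => Rlt (dist X (iterlim k p r.+1 m G i) z) eps)).
  by exists eps; split.
have large := uf_gtn pm (hp _ (pidx_range m)).2 L.
have res := hres _ (pidx_range m).
have [n [[Ln nm] close]] :=
  uf_ex pm (ufI pm (ufI pm large res) (ufI_list pm (l:=Gs) (fun G _ => near G))).
by exists n; split=> //; rewrite nm pidx_mod.
Qed.

Lemma iterlim_approx r m i (Gs : list ((nat -> nat) -> Base X)) L eps :
  0 < m -> Rlt 0 eps -> exists i', [/\
    (forall t, (t < m) || (m + r <= t) -> i' t = i t),
    (forall t, m <= t < m + r -> L < i' t /\ i' t = t %[mod k]),
    (forall t, m <= t -> t.+1 < m + r -> i' t < i' t.+1) &
    (forall G, List.In G Gs -> Rlt (dist X (G i') (iterlim k p r m G i)) eps)].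
Proof.
elim: r m i L eps => [|r IH] m i L eps m0 eps0.
  exists i; split=> [//|t|t|G _]; rewrite ?addn0; try lia.
  by rewrite (proj2 (dist_refl X _ _)).
have [n [Ln nm close]] := iterlim_step r m i Gs L (Rdiv eps 2) m0 ltac:(lra).
have [i' [out win inc approx]] := IH m.+1 (upd i m n) n (Rdiv eps 2) isT ltac:(lra).
have i'm : i' m = n by rewrite out ?ltnSn // /upd eqxx.
exists i'; split.
- by move=> t tout; rewrite out ?upd_eq //; lia.
- move=> t /andP[mt tmr]; case: (ltngtP m t) mt => // [mt _ | <- _]; last by rewrite i'm.
  by have [nt ->] := win t ltac:(lia); split; lia.
- move=> t mt; case: (ltngtP m t) mt => // [mt _ tmr | <- _ tmr]; first by apply: inc; lia.
  by rewrite i'm; have [] := win m.+1 ltac:(lia).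
- move=> G inG; have := approx G inG; have := close G inG.
  have := dist_tri X (G i') (iterlim k p r.+1 m G i) (iterlim k p r m.+1 G (upd i m n)).
  rewrite (dist_sym X (iterlim k p r.+1 m G i)); lra.
Qed.
End IteratedLimit.

Definition prolong (g : nat -> nat) (w t : nat) : nat :=
  if t <= w then g t else g w + (t - w).

Lemma prolong_admissible k g w :
  (forall t, t < w -> g t < g t.+1) -> (forall t, t <= w -> g t = t %[mod k]) ->
  admissible k (prolong g w).
Proof.
rewrite /prolong => ginc gmod; split=> t.
  by case: (ltngtP t w) => [tw | wt | ->]; [exact: ginc | lia | lia].
case: (leqP t w) => [/gmod // | wt].
by rewrite -modnDml gmod // modnDml subnKC // ltnW.
Qed.

Fixpoint subseqs (s : seq nat) : list (seq nat) :=
  if s is x :: s' then List.app (subseqs s') (List.map (cons x) (subseqs s'))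
  else [:: [::]].

Lemma subseqs_complete s t : subseq t s -> List.In t (subseqs s).
Proof.
elim: s t => [|x s IH] [|y t] //=; [by left | | ].
  by move=> _; apply: List.in_or_app; left; exact/IH/sub0seq.
case: eqP => [-> | _] ts; apply: List.in_or_app; last by left; exact: IH.
by right; apply/List.in_map/IH.
Qed.

Lemma isF0_subseq_iota b n : isF0 b -> smax b <= n -> subseq b (iota 1 n).
Proof.
move=> /andP[bsorted /allP b0] bn.
have <- : [seq x <- iota 1 n | x \in b] = b.
  apply: (irr_sorted_eq ltn_trans ltnn) => //.
    exact/sorted_filter/iota_ltn_sorted/ltn_trans.
  move=> x; rewrite mem_filter mem_iota.
  by case bx: (x \in b) => //=; rewrite add1n ltnS b0 ?(leq_trans (smax_ub bx) bn).
exact: filter_subseq.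
Qed.

Lemma alphabeta_window k b : depends_below (smax b + k).+1 (fun i => alphabeta k i b).
Proof.
move=> i i' ii'; rewrite /alphabeta /abeta; congr (canon (flatten _)).
apply/eq_in_map => j /smax_ub jb; rewrite /alphaj.
by rewrite !ii' //; lia.
Qed.

Section Approximation.
Context {k : nat} (k0 : 0 < k) {p : nat -> (nat -> Prop) -> Prop}.
Hypothesis hp : forall j, 1 <= j <= k -> nonprincipal_ultrafilter (p j).
Hypothesis hres : forall j, 1 <= j <= k -> p j (fun n => n %% k = j %% k).
Context {X : Metric_Space} (hX : compact_space X) (f : seq nat -> Base X).

Lemma finite_approximation n eps : Rlt 0 eps -> exists i, admissible k i /\
  forall b, isF0 b -> smax b <= n -> Rlt (dist X (f (alphabeta k i b)) (ftilde k p f b)) eps.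
Proof.
move=> eps0; pose G b i := f (alphabeta k i b).
have [g [out win inc approx]] := iterlim_approx k0 hp hres hX (n + k) 1 (fun _ => 0)
  (List.map G (subseqs (iota 1 n))) 0 eps isT eps0.
have g0 : g 0 = 0 by apply: out.
exists (prolong g (n + k)); split.
  apply: prolong_admissible => [[|t] tw | [|t] tw]; rewrite ?g0 //.
  - by have [] := win 1 ltac:(lia).
  - by apply: inc; lia.
  - by have [_] := win t.+1 ltac:(lia).
move=> b bF bn.
have Gb : depends_below (smax b + k).+1 (G b).
  by move=> i i' ii'; congr f; apply: alphabeta_window.
have -> : f (alphabeta k (prolong g (n + k)) b) = G b g.
  by apply: Gb => u ub; rewrite /prolong ifT //; lia.
have pad := iterlim_pad k0 hp (smax b + k) (n - smax b) 1 (G b) (fun _ => 0) Gb.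
rewrite /ftilde -pad (_ : smax b + k + (n - smax b) = n + k); last lia.
by apply/approx/List.in_map/subseqs_complete/isF0_subseq_iota.
Qed.
End Approximation.

Theorem lemma3p2 (k : nat) (hk : 0 < k)
  (p : nat -> (nat -> Prop) -> Prop)
  (hp : forall j, 1 <= j <= k -> nonprincipal_ultrafilter (p j))
  (hres : forall j, 1 <= j <= k -> p j (fun n => n %% k = j %% k))
  (X : Metric_Space) (hX : compact_space X)
  (f : seq nat -> Base X) :
  asymptotic_subseq k k f (ftilde k p f).
Proof.
have approx n := finite_approximation hk hp hres hX f n _
  (Rinv_0_lt_compat _ (lt_0_INR _ (Nat.lt_0_succ n))).
have [I hI] := choice _ approx.
exists (fun n => alphaj k (I n)); split=> [n | b bF eps eps0].
  exact: (alphaj_subseq_family hk (hI n).1).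
have [N [Neps N0]] := archimed_cor1 eps eps0.
exists (maxn (smax b) N) => n; rewrite geq_max => /andP[bn Nn].
apply: Rlt_trans ((hI n).2 b bF bn) (Rle_lt_trans _ _ _ _ Neps).
apply: Rinv_le_contravar; first exact: lt_0_INR.
by apply/le_INR/leP; exact: leqW.
Qed.
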